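(* In the setting described in the context, for every metric $d$ on $A$ with $d\in\mathcal{B}_2$ and every $x\in A$, $$d(x,\cdot)\ge\frac{d(\cdot,\cdot)}{2}.$$
   Context: $A$ is a nonempty set (possibly infinite). A metric on $A$ is a function $d:A^2\to\mathbb{R}$ such that for all $x,y,z\in A$: $d(x,y)=0$ iff $x=y$, and $d(x,y)+d(x,z)-d(y,z)\ge0$. $\mathcal{B}_1$ is a set of functions $A\to\mathbb{R}$ forming a real linear space containing all constant functions, and $\mu:\mathcal{B}_1\to\mathbb{R}$ is a linear functional with $\mu(c)=c$ for every constant function $c$ and monotone: if $f,g\in\mathcal{B}_1$ and $f\ge g$ pointwise, then $\mu(f)\ge\mu(g)$. For $f:A^2\to\mathbb{R}$ such that $y\mapsto f(x,y)$ lies in $\mathcal{B}_1$ for every $x$, write $f(x,\cdot)=\mu(y\mapsto f(x,y))$. $\mathcal{B}_2$ is a set of functions $A^2\to\mathbb{R}$ forming a real linear space that contains all constant functions and all functions $(x,y)\mapsto h(x)$ and $(x,y)\mapsto h(y)$ with $h\in\mathcal{B}_1$, and such that for every $f\in\mathcal{B}_2$: $y\mapsto f(x,y)\in\mathcal{B}_1$ for every $x$, $x\mapsto f(x,\cdot)\in\mathcal{B}_1$, and $x\mapsto f(x,x)\in\mathcal{B}_1$. For a symmetric $d\in\mathcal{B}_2$, $d(\cdot,\cdot)=\mu(x\mapsto d(x,\cdot))$ (a real number). *)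

From Stdlib Require Import Reals.
Open Scope R_scope.

Definition lin_space_with_consts {X : Type} (B : (X -> R) -> Prop) : Prop :=
  (forall f g, B f -> B g -> B (fun x => f x + g x)) /\
  (forall (c : R) f, B f -> B (fun x => c * f x)) /\
  (forall c : R, B (fun _ => c)).

(* mu : B1 -> R, linear, normalized on constants, monotone.
   mu is given as a total map whose behaviour is only constrained on B1. *)
Definition mean_on {A : Type} (B1 : (A -> R) -> Prop) (mu : (A -> R) -> R) : Prop :=
  (forall f g, B1 f -> B1 g -> mu (fun x => f x + g x) = mu f + mu g) /\
  (forall (c : R) f, B1 f -> mu (fun x => c * f x) = c * mu f) /\
  (forall c : R, mu (fun _ => c) = c) /\
  (forall f g, B1 f -> B1 g -> (forall x, g x <= f x) -> mu g <= mu f).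

(* f(x,.) := mu (y |-> f(x,y)) *)
Definition sec {A : Type} (mu : (A -> R) -> R) (f : A -> A -> R) (x : A) : R :=
  mu (fun y => f x y).

Definition B2_space {A : Type} (B1 : (A -> R) -> Prop) (mu : (A -> R) -> R)
  (B2 : (A -> A -> R) -> Prop) : Prop :=
  (forall f g, B2 f -> B2 g -> B2 (fun x y => f x y + g x y)) /\
  (forall (c : R) f, B2 f -> B2 (fun x y => c * f x y)) /\
  (forall c : R, B2 (fun _ _ => c)) /\
  (forall h, B1 h -> B2 (fun x _ => h x)) /\
  (forall h, B1 h -> B2 (fun _ y => h y)) /\
  (forall f, B2 f ->
     (forall x, B1 (fun y => f x y)) /\
     B1 (fun x => sec mu f x) /\
     B1 (fun x => f x x)).

Definition is_metric {A : Type} (d : A -> A -> R) : Prop :=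
  (forall x y, d x y = 0 <-> x = y) /\
  (forall x y z, d x y + d x z - d y z >= 0).

(* d(.,.) := mu (x |-> d(x,.)) *)
Definition sec2 {A : Type} (mu : (A -> R) -> R) (d : A -> A -> R) : R :=
  mu (fun x => sec mu d x).

(* Averaging the triangle inequality d(y,z) <= d(x,y) + d(x,z) over z gives
   d(y,.) <= d(x,y) + d(x,.); averaging this over y gives
   d(.,.) <= d(x,.) + d(x,.). *)
From Stdlib Require Import Reals Lra.
Open Scope R_scope.
Set Implicit Arguments.

Lemma metric_triangle (A : Type) (d : A -> A -> R) (x y z : A) :
  is_metric d -> d y z <= d x y + d x z.
Proof. intros [_ Htri]. pose proof (Htri x y z). lra. Qed.

Section Mean.

Variables (A : Type) (B1 : (A -> R) -> Prop) (mu : (A -> R) -> R).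
Hypotheses (HB1 : lin_space_with_consts B1) (Hmu : mean_on B1 mu).

Lemma B1_addl (c : R) (f : A -> R) : B1 f -> B1 (fun y => c + f y).
Proof.
  intro Bf. destruct HB1 as [Badd [_ Bc]].
  exact (Badd (fun _ => c) f (Bc c) Bf).
Qed.

Lemma mean_addl (c : R) (f : A -> R) : B1 f -> mu (fun y => c + f y) = c + mu f.
Proof.
  intro Bf. destruct HB1 as [_ [_ Bc]]. destruct Hmu as [Madd [_ [Mc _]]].
  rewrite (Madd (fun _ => c) f (Bc c) Bf), Mc. reflexivity.
Qed.

Lemma mean_le (f g : A -> R) : B1 f -> B1 g -> (forall y, f y <= g y) -> mu f <= mu g.
Proof. destruct Hmu as [_ [_ [_ Mmon]]]. auto. Qed.

Variable d : A -> A -> R.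
Hypotheses (Hd : is_metric d) (Brow : forall x, B1 (fun y => d x y)).

Lemma sec_le_dist_add_sec (x y : A) : sec mu d y <= d x y + sec mu d x.
Proof.
  unfold sec. rewrite <- mean_addl by apply Brow.
  apply mean_le; [apply Brow | apply B1_addl, Brow |].
  intro z. apply metric_triangle, Hd.
Qed.

Lemma sec2_le_twice_sec (x : A) : B1 (sec mu d) -> sec2 mu d <= 2 * sec mu d x.
Proof.
  intro Bsec.
  assert (Hle : sec2 mu d <= mu (fun y => sec mu d x + d x y)).
  { apply mean_le; [exact Bsec | apply B1_addl, Brow |].
    intro y. cbv beta. pose proof (sec_le_dist_add_sec x y). lra. }
  rewrite (mean_addl _ (f := fun y => d x y)) in Hle by apply Brow.
  unfold sec in *. lra.
Qed.

End Mean.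

Theorem corollary1 (A : Type) (a0 : A)
  (B1 : (A -> R) -> Prop) (mu : (A -> R) -> R) (B2 : (A -> A -> R) -> Prop)
  (HB1 : lin_space_with_consts B1) (Hmu : mean_on B1 mu)
  (HB2 : B2_space B1 mu B2)
  (d : A -> A -> R) (Hd : is_metric d) (HdB2 : B2 d) (x : A) :
  sec mu d x >= sec2 mu d / 2.
Proof.
  destruct HB2 as [_ [_ [_ [_ [_ HB2sec]]]]].
  destruct (HB2sec d HdB2) as [Brow [Bsec _]].
  pose proof (sec2_le_twice_sec HB1 Hmu Hd Brow x Bsec).
  lra.
Qed.
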